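(* For every $\theta\in\mathbb R$ there exists a unique $\tau^\star=\tau^\star(\theta)\in(-x_u,x_q)$ such that $s_1(\theta,\tau^\star)=s_2(\theta,\tau^\star)$. (The paper calls $\tau^\star$ the equalizing prejudice and $s(\tau^\star):=s_1(\theta,\tau^\star)=s_2(\theta,\tau^\star)$ the equalized score.)
   Context: Setup. Let $Q\in\{0,1\}$ be a random variable with $\mathbb P(Q=1)=\pi\in(0,1)$, and let $(\Theta,\Gamma)$ be a real-valued random vector whose conditional joint density given $Q=1$ is $h_q(\theta,\gamma)$ and given $Q=0$ is $h_u(\theta,\gamma)$, both strictly positive on $\mathbb R^2$ (so $\Theta,\Gamma$ are continuous random variables and the conditional law of $\Gamma$ given $\Theta=\theta$, also given $Q$, has full support). Monotone likelihood ratio assumption: $l(\theta,\gamma)=h_q(\theta,\gamma)/h_u(\theta,\gamma)$ is continuous and strictly increasing in each of $\theta$ and $\gamma$, and for each $\theta$ the map $\gamma\mapsto l(\theta,\gamma)$ has infimum $0$ and supremum $+\infty$. Fix payoffs $x_q>0$, $x_u>0$. For a prejudice level $\tau\in(-x_u,x_q)$ let $A(\tau)=\mathbb 1\{l(\Theta,\Gamma)>\frac{(1-\pi)(x_u+\tau)}{\pi(x_q-\tau)}\}$ (equivalently, with $\kappa(\theta,\gamma)=\mathbb P(Q=1\mid\Theta=\theta,\Gamma=\gamma)$, accept iff $\kappa x_q-(1-\kappa)x_u>\tau$). Define the scores $s_1(\theta,\tau)=\mathbb E[Q\mid\Theta=\theta,A(\tau)=1]$ and $s_2(\theta,\tau)=\mathbb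 E[A(\tau)\mid\Theta=\theta]=\mathbb P(A(\tau)=1\mid\Theta=\theta)$. Write $\phi(\theta)=\mathbb P(Q=1\mid\Theta=\theta)$. *)

From HB Require Import structures.
From mathcomp Require Import all_boot all_order all_algebra.
From mathcomp Require Import all_classical all_reals all_analysis.
Set Implicit Arguments. Unset Strict Implicit. Unset Printing Implicit Defensive.
Import Order.TTheory GRing.Theory Num.Theory.
Import numFieldNormedType.Exports.
Local Open Scope classical_set_scope.
Local Open Scope ring_scope.

Section Defs.
Variable R : realType.
Local Notation mu := (@lebesgue_measure R).

Definition sec_int (h : R -> R -> R) (th : R) (S : set R) : R :=
  fine (\int[mu]_(g in S) (h th g)%:E)%E.

Definition lr (hq hu : R -> R -> R) (th g : R) : R := hq th g / hu th g.

Definition thr (pi xq xu tau : R) : R :=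
  ((1 - pi) * (xu + tau)) / (pi * (xq - tau)).

(* the set of gammas accepted at (theta, tau): A(tau) = 1 *)
Definition acc (hq hu : R -> R -> R) (pi xq xu th tau : R) : set R :=
  [set g | thr pi xq xu tau < lr hq hu th g].

(* s1(theta,tau) = E[Q | Theta = theta, A(tau) = 1] *)
Definition s1 (hq hu : R -> R -> R) (pi xq xu th tau : R) : R :=
  let A := acc hq hu pi xq xu th tau in
  (pi * sec_int hq th A) /
  (pi * sec_int hq th A + (1 - pi) * sec_int hu th A).

(* s2(theta,tau) = P(A(tau) = 1 | Theta = theta) *)
Definition s2 (hq hu : R -> R -> R) (pi xq xu th tau : R) : R :=
  let A := acc hq hu pi xq xu th tau in
  (pi * sec_int hq th A + (1 - pi) * sec_int hu th A) /
  (pi * sec_int hq th setT + (1 - pi) * sec_int hu th setT).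

End Defs.

(** Fix θ and write f_q, f_u for the sections of h_q, h_u and L for the section
    of the likelihood ratio, a continuous increasing bijection of ℝ onto (0, ∞).
    Accepting at prejudice τ means accepting exactly the γ above the cutoff a
    with L a = thr τ, and τ ↦ a is a bijection from (-x_u, x_q) onto ℝ.  In the
    variable a, s₂ is (up to a constant) the mass π∫_a^∞ f_q + (1-π)∫_a^∞ f_u,
    continuous and strictly decreasing from 1 to 0, while s₁ is continuous and,
    by the monotone likelihood ratio, nondecreasing with values in (0, 1).
    Hence s₁ - s₂ is strictly increasing, negative far left and positive far
    right, so it has exactly one zero. *)
From HB Require Import structures.
From mathcomp Require Import all_boot all_order all_algebra.
From mathcomp Require Import all_classical all_reals all_analysis.
From mathcomp Require Import ring lra measurable_realfun.
Import Order.TTheory GRing.Theory Num.Theory.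
Import numFieldNormedType.Exports.
Local Open Scope classical_set_scope.
Local Open Scope ring_scope.
Set Implicit Arguments. Unset Strict Implicit. Unset Printing Implicit Defensive.

Section UpperTail.
Variable R : realType.
Local Notation mu := (@lebesgue_measure R).
Variable f : R -> R.
Hypothesis f_gt0 : forall x, 0 < f x.
Hypothesis f_int : mu.-integrable setT (EFin \o f).

Definition upper_tail (a : R) := \int[mu]_(x in `]a, +oo[) f x.
Definition total_mass := \int[mu]_(x in [set: R]) f x.

Let f_meas : measurable_fun setT f.
Proof. by case/integrableP: f_int => /measurable_EFinP. Qed.

Let f_intS (A : set R) : measurable A -> mu.-integrable A (EFin \o f).
Proof. by move=> mA; apply: integrableS f_int. Qed.

Let f_Rintegral_ge0 (A : set R) : 0 <= \int[mu]_(x in A) f x.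
Proof. by apply: Rintegral_ge0 => x _; exact: ltW. Qed.

Lemma Rintegral_itv_gt0 (a b : R) : a < b -> 0 < \int[mu]_(x in `]a, b]) f x.
Proof.
move=> ab; rewrite lt0r f_Rintegral_ge0 andbT; apply/negP => /eqP int0.
have abs0 : (\int[mu]_(x in `]a, b]) `|(f x)%:E| = 0)%E.
  rewrite -[RHS]/(0%:E) -int0 /Rintegral fineK; last first.
    by apply: integrable_fin_num => //; exact: f_intS.
  by apply: eq_integral => x _; rewrite gee0_abs // lee_fin ltW.
have mf : measurable_fun `]a, b] (EFin \o f).
  by apply/measurable_EFinP; exact: measurable_funS f_meas.
have [N [mN muN0 sub]] :=
  (@ae_eq_integral_abs _ _ _ mu `]a, b] (measurable_itv _) _ mf).1 abs0.
have : (mu `]a, b] <= mu N)%E.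
  apply: le_measure; rewrite ?inE // => x xab; apply: sub => /= /(_ xab) /eqP.
  by rewrite eqe gt_eqF.
rewrite muN0 lebesgue_measure_itv /= lte_fin ab -EFinD lee_fin; lra.
Qed.

Lemma le_Rintegral_subset (A B : set R) : measurable A -> measurable B ->
  A `<=` B -> \int[mu]_(x in A) f x <= \int[mu]_(x in B) f x.
Proof.
move=> mA mB AB; rewrite /Rintegral fine_le //.
- by apply: integrable_fin_num => //; exact: f_intS.
- by apply: integrable_fin_num => //; exact: f_intS.
apply: ge0_subset_integral => //; last by move=> x _; rewrite lee_fin ltW.
by apply/measurable_EFinP; exact: measurable_funS f_meas.
Qed.

Lemma upper_tail_split (a b : R) : a <= b ->
  upper_tail a = \int[mu]_(x in `]a, b]) f x + upper_tail b.
Proof.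
move=> ab; rewrite /upper_tail -Rintegral_setU //; last first.
- apply/disj_set2P; rewrite -subset0 => x [] /=.
  by rewrite !in_itv /= andbT => /andP[_ xb] /(le_lt_trans xb); rewrite ltxx.
- by apply: f_intS; exact: measurableU.
congr Rintegral; apply/seteqP; split => x /=; rewrite !in_itv /= ?andbT.
- by move=> ax; case: (leP x b) => xb; [left|right]; rewrite ?ax ?xb.
- by case=> [/andP[]|] // bx; apply: le_lt_trans bx.
Qed.

Lemma total_mass_split (a : R) :
  total_mass = \int[mu]_(x in `]-oo, a]) f x + upper_tail a.
Proof.
rewrite /total_mass /upper_tail -Rintegral_setU //; last first.
- apply/disj_set2P; rewrite -subset0 => x [] /=.
  by rewrite !in_itv /= andbT => xa /(le_lt_trans xa); rewrite ltxx.
- by apply: f_intS; exact: measurableU.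
congr Rintegral; apply/seteqP; split => x //= _.
by rewrite !in_itv /= andbT; case: (leP x a) => xa; [left|right].
Qed.

Lemma upper_tail_ge0 (a : R) : 0 <= upper_tail a.
Proof. exact: f_Rintegral_ge0. Qed.

Lemma upper_tail_le_total (a : R) : upper_tail a <= total_mass.
Proof. by rewrite (total_mass_split a) lerDr. Qed.

Lemma upper_tail_decr (a b : R) : a < b -> upper_tail b < upper_tail a.
Proof.
by move=> ab; rewrite (upper_tail_split (ltW ab)) ltrDr Rintegral_itv_gt0.
Qed.

Lemma upper_tail_nonincr (a b : R) : a <= b -> upper_tail b <= upper_tail a.
Proof. by rewrite le_eqVlt => /predU1P[->//|/upper_tail_decr/ltW]. Qed.

Lemma upper_tail_gt0 (a : R) : 0 < upper_tail a.
Proof.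
apply: le_lt_trans (upper_tail_ge0 (a + 1)) (upper_tail_decr _).
by rewrite ltrDl ltr01.
Qed.

Lemma total_mass_approx (e : R) : 0 < e -> exists n : nat,
  total_mass - e < \int[mu]_(x in `](- n%:R), n%:R]) f x.
Proof.
move=> e0.
have cvg_int : (\int[mu]_(x in `](1 *- n), n%:R]) (EFin \o f) x)%E @[n --> \oo]
    --> total_mass%:E.
  rewrite /total_mass /Rintegral fineK; last exact: integrable_fin_num.
  have := @ge0_nondecreasing_set_cvg_integral _ _ _ _ _ mu.
  move/(_ (fun n : nat => [set` Interval (BSide false (1 *- n)) (BSide false n%:R)])).
  rewrite bigcup_itvT; apply.
  - move=> n m nm; apply/subsetPset => x /=; rewrite !in_itv /= => /andP[xl xr].
    rewrite (le_trans xr) ?ler_nat ?andbT //.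
    by apply: le_lt_trans xl; rewrite lerN2 ler_nat.
  - by move=> n; exact: measurable_itv.
  - by move=> n; apply/measurable_EFinP; exact: measurable_funS f_meas.
  - by move=> n x _; rewrite lee_fin ltW.
move/fine_cvgP: cvg_int => [_ /cvgrPdist_lt /(_ e e0) [N _ HN]].
exists N; have := HN N (leqnn N); rewrite /= ltr_norml => /andP[_ h].
move: h; rewrite /Rintegral -[- N%:R]/(1 *- N); lra.
Qed.

Lemma upper_tail_small (e : R) : 0 < e ->
  exists a, forall b, a <= b -> upper_tail b < e.
Proof.
move=> /total_mass_approx [n Hn]; exists n%:R => b nb.
have := total_mass_split n%:R; have := upper_tail_nonincr nb.
have : \int[mu]_(x in `](- n%:R), n%:R]) f x <= \int[mu]_(x in `]-oo, n%:R]) f x.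
  by apply: le_Rintegral_subset => // x /=; rewrite !in_itv /= => /andP[].
lra.
Qed.

Lemma upper_tail_near_total (e : R) : 0 < e ->
  exists a, forall b, b <= a -> total_mass - e < upper_tail b.
Proof.
move=> /total_mass_approx [n Hn]; exists (- n%:R) => b bn.
have := upper_tail_nonincr bn.
have : \int[mu]_(x in `](- n%:R), n%:R]) f x <= upper_tail (- n%:R).
  by apply: le_Rintegral_subset => // x /=; rewrite !in_itv /= => /andP[->].
lra.
Qed.

Lemma continuous_upper_tail : continuous upper_tail.
Proof.
have int_small e : 0 < e -> exists d, 0 < d /\
    forall x y, x <= y -> y - x < d -> upper_tail x - upper_tail y < e.
  move=> e0; have [d [d0 Hd]] := integral_normr_continuous f_int e0.
  exists d; split => // x y xy yxd; rewrite (upper_tail_split xy) addrK.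
  have -> : \int[mu]_(t in `]x, y]) f t = \int[mu]_(t in `]x, y]) `|f t|.
    by apply: eq_Rintegral => t _; rewrite ger0_norm // ltW.
  apply: Hd => //; change (mu `]x, y] < d%:E)%E; rewrite lebesgue_measure_itv /= lte_fin.
  by case: ifP => _; rewrite -?EFinD lte_fin.
move=> x; apply/cvgrPdist_lt => e e0; have [d [d0 Hd]] := int_small e e0.
exists d => //= y; rewrite /ball /= !ltr_norml => /andP[h1 h2].
case: (leP x y) => xy.
- by have := Hd x y xy ltac:(lra); have := upper_tail_nonincr xy; lra.
- have := Hd y x (ltW xy) ltac:(lra); have := upper_tail_nonincr (ltW xy); lra.
Qed.

End UpperTail.

Section EqualizingGap.
Variable R : realType.
Local Notation mu := (@lebesgue_measure R).
Variables (pi : R) (fq fu L : R -> R).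
Hypothesis pi_gt0 : 0 < pi.
Hypothesis pi_lt1 : pi < 1.
Hypothesis fq_gt0 : forall x, 0 < fq x.
Hypothesis fu_gt0 : forall x, 0 < fu x.
Hypothesis fq_int : mu.-integrable setT (EFin \o fq).
Hypothesis fu_int : mu.-integrable setT (EFin \o fu).
Hypothesis fqE : forall x, fq x = L x * fu x.
Hypothesis L_nondecr : {homo L : x y / x <= y}.

Let Q := upper_tail fq.
Let U := upper_tail fu.

Definition accepted_mass (a : R) := pi * Q a + (1 - pi) * U a.
Definition population_mass := pi * total_mass fq + (1 - pi) * total_mass fu.
Definition score1 (a : R) := pi * Q a / accepted_mass a.
Definition score2 (a : R) := accepted_mass a / population_mass.
Definition score_gap (a : R) := score1 a - score2 a.

Let Q_gt0 a : 0 < Q a. Proof. exact: upper_tail_gt0. Qed.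
Let U_gt0 a : 0 < U a. Proof. exact: upper_tail_gt0. Qed.

Lemma accepted_mass_gt0 (a : R) : 0 < accepted_mass a.
Proof. by rewrite addr_gt0 // mulr_gt0 // subr_gt0. Qed.

Lemma population_mass_gt0 : 0 < population_mass.
Proof.
apply: lt_le_trans (accepted_mass_gt0 0) _.
apply: lerD; apply: ler_wpM2l; rewrite ?subr_ge0 ?(ltW pi_gt0) ?(ltW pi_lt1) //;
  exact: upper_tail_le_total.
Qed.

Let fq_intS (A : set R) : measurable A -> mu.-integrable A (EFin \o fq).
Proof. by move=> mA; apply: integrableS fq_int. Qed.
Let fu_intS (A : set R) : measurable A -> mu.-integrable A (EFin \o fu).
Proof. by move=> mA; apply: integrableS fu_int. Qed.

Lemma Rintegral_fq_le (A : set R) (c : R) : measurable A ->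
  (forall x, A x -> L x <= c) ->
  \int[mu]_(x in A) fq x <= c * \int[mu]_(x in A) fu x.
Proof.
move=> mA Lc; rewrite -RintegralZl ?fu_intS //.
apply: le_Rintegral; rewrite ?fq_intS //; first exact: integrableZl (fu_intS _).
by move=> x Ax; rewrite fqE ler_wpM2r ?Lc // ltW.
Qed.

Lemma Rintegral_fq_ge (A : set R) (c : R) : measurable A ->
  (forall x, A x -> c <= L x) ->
  c * \int[mu]_(x in A) fu x <= \int[mu]_(x in A) fq x.
Proof.
move=> mA cL; rewrite -RintegralZl ?fu_intS //.
apply: le_Rintegral; rewrite ?fq_intS //; first exact: integrableZl (fu_intS _).
by move=> x Ax; rewrite fqE ler_wpM2r ?cL // ltW.
Qed.

Lemma score1_nondecr : {homo score1 : a b / a <= b}.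
Proof.
move=> a b ab.
set q := \int[mu]_(x in `]a, b]) fq x; set u := \int[mu]_(x in `]a, b]) fu x.
have Qa : Q a = q + Q b := upper_tail_split fq_int ab.
have Ua : U a = u + U b := upper_tail_split fu_int ab.
have u_ge0 : 0 <= u by apply: Rintegral_ge0 => x _; exact: ltW.
have q_le : q <= L b * u.
  by apply: Rintegral_fq_le => // x /=; rewrite in_itv => /andP[_ /L_nondecr].
have Qb_ge : L b * U b <= Q b.
  by apply: Rintegral_fq_ge => // x /=; rewrite in_itv andbT => /ltW /L_nondecr.
have cross : q * U b <= Q b * u by have := U_gt0 b; nra.
rewrite /score1 ler_pdivrMr ?accepted_mass_gt0 // mulrAC.
rewrite ler_pdivlMr ?accepted_mass_gt0 // /accepted_mass Qa Ua.
have : 0 <= pi * (1 - pi) * (Q b * u - q * U b).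
  by rewrite !mulr_ge0 ?subr_ge0 // ltW.
nra.
Qed.

Lemma score2_decr : {homo score2 : a b / a < b >-> b < a}.
Proof.
move=> a b ab; rewrite /score2 ltr_pM2r ?invr_gt0 ?population_mass_gt0 //.
by rewrite ltrD // ltr_pM2l ?subr_gt0 //; exact: upper_tail_decr.
Qed.

Lemma score_gap_incr : {homo score_gap : a b / a < b}.
Proof.
move=> a b ab; apply: ler_ltD; first exact: score1_nondecr (ltW ab).
by rewrite ltrN2; exact: score2_decr.
Qed.

Lemma continuous_score_gap : continuous score_gap.
Proof.
have Q_cont : continuous Q := continuous_upper_tail fq_gt0 fq_int.
have U_cont : continuous U := continuous_upper_tail fu_gt0 fu_int.
have N_cont : continuous accepted_mass.
  move=> x; apply: (@cvgD _ _ _ _ _ (fun a => pi * Q a) (fun a => (1 - pi) * U a)).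
  - exact: cvgMl_tmp (Q_cont x).
  - exact: cvgMl_tmp (U_cont x).
move=> x; apply: (@cvgB _ _ _ _ _ score1 score2).
  apply: (@cvgM _ _ _ _ (fun a => pi * Q a) (fun a => (accepted_mass a)^-1)).
    exact: cvgMl_tmp (Q_cont x).
  by apply: cvgV; [rewrite gt_eqF ?accepted_mass_gt0 | exact: N_cont].
exact: cvgMr_tmp (N_cont x).
Qed.

Lemma score1_gt0 (a : R) : 0 < score1 a.
Proof. by rewrite divr_gt0 ?accepted_mass_gt0 // mulr_gt0. Qed.

Lemma score1_lt1 (a : R) : score1 a < 1.
Proof.
rewrite ltr_pdivrMr ?accepted_mass_gt0 // mul1r ltrDl mulr_gt0 //.
by rewrite subr_gt0.
Qed.

(* Far right both tails are small, so s₂ falls below the value of s₁ at 0. *)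
Lemma score_gap_gt0_far_right : exists a, 0 < score_gap a.
Proof.
set c := score1 0; have cD_gt0 : 0 < c * population_mass.
  by rewrite mulr_gt0 ?score1_gt0 ?population_mass_gt0.
have [aq Qsmall] := upper_tail_small fq_gt0 fq_int cD_gt0.
have [au Usmall] := upper_tail_small fu_gt0 fu_int cD_gt0.
pose a := Num.max 0 (Num.max aq au); exists a.
have a_ge0 : 0 <= a by rewrite le_max lexx.
have /Qsmall Qa : aq <= a by rewrite !le_max lexx orbT.
have /Usmall Ua : au <= a by rewrite !le_max lexx !orbT.
have : score2 a < c.
  rewrite ltr_pdivrMr ?population_mass_gt0 // /accepted_mass.
  have : 0 < pi * (c * population_mass - Q a) by rewrite mulr_gt0 ?subr_gt0.
  have : 0 < (1 - pi) * (c * population_mass - U a) by rewrite !mulr_gt0 ?subr_gt0.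
  lra.
have := score1_nondecr a_ge0; rewrite /score_gap -/c; lra.
Qed.

Lemma score_gap_lt0_far_left : exists a, score_gap a < 0.
Proof.
set c := score1 0; have e_gt0 : 0 < (1 - c) * population_mass.
  by rewrite mulr_gt0 ?subr_gt0 ?score1_lt1 ?population_mass_gt0.
have [aq Qbig] := upper_tail_near_total fq_gt0 fq_int e_gt0.
have [au Ubig] := upper_tail_near_total fu_gt0 fu_int e_gt0.
pose a := Num.min 0 (Num.min aq au); exists a.
have a_le0 : a <= 0 by rewrite ge_min lexx.
have /Qbig Qa : a <= aq by rewrite !ge_min lexx orbT.
have /Ubig Ua : a <= au by rewrite !ge_min lexx !orbT.
have : c < score2 a.
  rewrite ltr_pdivlMr ?population_mass_gt0 // /accepted_mass.
  set e := (1 - c) * population_mass in Qa Ua.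
  have : 0 < pi * (Q a - (total_mass fq - e)) by rewrite mulr_gt0 ?subr_gt0.
  have : 0 < (1 - pi) * (U a - (total_mass fu - e)) by rewrite !mulr_gt0 ?subr_gt0.
  rewrite /e /population_mass; lra.
have := score1_nondecr a_le0; rewrite /score_gap -/c; lra.
Qed.

Lemma score_gap_unique_root : exists! a, score_gap a = 0.
Proof.
have [b gap_b] := score_gap_lt0_far_left.
have [c gap_c] := score_gap_gt0_far_right.
have bc : b <= c by rewrite leNgt; apply/negP => /score_gap_incr; lra.
have [|a _ gap_a] := IVT bc (continuous_subspaceT continuous_score_gap) (v := 0).
  by rewrite ge_min le_max (ltW gap_b) (ltW gap_c) orbT.
exists a; split=> // a' gap_a'.
by have [|/score_gap_incr|//] := ltgtP a a'; [move/score_gap_incr|];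
  rewrite gap_a gap_a' ltxx.
Qed.

End EqualizingGap.

Section Threshold.
Variable R : realType.
Variables pi xq xu : R.
Hypothesis pi_gt0 : 0 < pi.
Hypothesis pi_lt1 : pi < 1.
Hypothesis xq_gt0 : 0 < xq.
Hypothesis xu_gt0 : 0 < xu.

Lemma thr_gt0 (tau : R) : - xu < tau < xq -> 0 < thr pi xq xu tau.
Proof.
move=> /andP[xu_tau tau_xq]; have p0 := pi_gt0; have p1 := pi_lt1.
by apply: divr_gt0; apply: mulr_gt0; lra.
Qed.

Lemma thr_inj (t1 t2 : R) : - xu < t1 < xq -> - xu < t2 < xq ->
  thr pi xq xu t1 = thr pi xq xu t2 -> t1 = t2.
Proof.
move=> /andP[_ t1_xq] /andP[_ t2_xq] /eqP; rewrite /thr eqr_div; last 2 first.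
- by rewrite mulf_neq0 ?gt_eqF ?subr_gt0.
- by rewrite mulf_neq0 ?gt_eqF ?subr_gt0.
move=> /eqP cross; have : pi * (1 - pi) * (xq + xu) * (t1 - t2) = 0.
  transitivity ((1 - pi) * (xu + t1) * (pi * (xq - t2)) -
                (1 - pi) * (xu + t2) * (pi * (xq - t1))); first ring.
  by rewrite cross subrr.
move/eqP; rewrite mulf_eq0 subr_eq0 => /orP[|/eqP//].
have : 0 < pi * (1 - pi) * (xq + xu) by rewrite !mulr_gt0 ?subr_gt0 ?addr_gt0.
by move/gt_eqF->.
Qed.

Lemma thr_onto (c : R) : 0 < c ->
  exists2 tau, - xu < tau < xq & thr pi xq xu tau = c.
Proof.
move=> c_gt0; have p0 := pi_gt0; have p1 : 0 < 1 - pi by rewrite subr_gt0.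
have s_gt0 : 0 < xq + xu by apply: addr_gt0.
pose D := pi * c + (1 - pi).
have D_gt0 : 0 < D by apply: addr_gt0 => //; exact: mulr_gt0.
(* solves the linear equation (1 - π)(x_u + τ) = c π (x_q - τ) *)
pose tau := (pi * xq * c - (1 - pi) * xu) / D.
have xu_tau : xu + tau = pi * c * (xq + xu) / D.
  by rewrite /tau /D; field; exact: lt0r_neq0.
have xq_tau : xq - tau = (1 - pi) * (xq + xu) / D.
  by rewrite /tau /D; field; exact: lt0r_neq0.
have h1 : 0 < pi * c * (xq + xu) / D by apply: divr_gt0 => //; rewrite !mulr_gt0.
have h2 : 0 < (1 - pi) * (xq + xu) / D by apply: divr_gt0 => //; rewrite mulr_gt0.
exists tau; first by apply/andP; split; lra.
rewrite /thr xu_tau xq_tau; field.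
by rewrite !lt0r_neq0.
Qed.

End Threshold.

Lemma continuous_attains_between (R : realType) (f : R -> R) (c : R) :
  continuous f -> (exists a, f a < c) -> (exists b, c < f b) -> exists x, f x = c.
Proof.
move=> f_cont [a fa_c] [b c_fb].
have ivt u v : u <= v -> Num.min (f u) (f v) <= c <= Num.max (f u) (f v) ->
    exists x, f x = c.
  by move=> uv /(IVT uv (continuous_subspaceT f_cont)) [x _ fx]; exists x.
have [ab|/ltW ba] := leP a b; [apply: (ivt a b ab) | apply: (ivt b a ba)];
  by rewrite ge_min le_max (ltW fa_c) (ltW c_fb) ?orbT.
Qed.

Lemma acc_cutoff (R : realType) (hq hu : R -> R -> R) (pi xq xu th tau a : R) :
  {mono lr hq hu th : x y / x < y} -> thr pi xq xu tau = lr hq hu th a ->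
  acc hq hu pi xq xu th tau = [set` `]a, +oo[].
Proof.
move=> l_mono thrE; apply/seteqP; split => x /=.
  by rewrite /acc /= thrE in_itv /= andbT l_mono.
by rewrite in_itv /= andbT /acc /= thrE l_mono.
Qed.

Lemma s1_sub_s2_cutoff (R : realType) (hq hu : R -> R -> R) (pi xq xu th tau a : R) :
  {mono lr hq hu th : x y / x < y} -> thr pi xq xu tau = lr hq hu th a ->
  s1 hq hu pi xq xu th tau - s2 hq hu pi xq xu th tau =
  score_gap pi (hq th) (hu th) a.
Proof. by move=> l_mono thrE; rewrite /s1 /s2 /= (acc_cutoff l_mono thrE). Qed.

Theorem mainTheorem1 (R : realType) (pi xq xu : R) (hq hu : R -> R -> R)
  (hpi : 0 < pi < 1) (hxq : 0 < xq) (hxu : 0 < xu)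
  (* h_q, h_u are strictly positive joint densities on R^2 *)
  (hq_pos : forall th g, 0 < hq th g) (hu_pos : forall th g, 0 < hu th g)
  (hq_meas : measurable_fun [set: R * R] (fun p : R * R => hq p.1 p.2))
  (hu_meas : measurable_fun [set: R * R] (fun p : R * R => hu p.1 p.2))
  (hq_dens : (\int[(@lebesgue_measure R \x @lebesgue_measure R)]_p
                 (hq p.1 p.2)%:E = 1)%E)
  (hu_dens : (\int[(@lebesgue_measure R \x @lebesgue_measure R)]_p
                 (hu p.1 p.2)%:E = 1)%E)
  (* conditional densities of Gamma given Theta = theta are defined for every theta *)
  (hq_sec : forall th, (@lebesgue_measure R).-integrable [set: R] (fun g => (hq th g)%:E))
  (hu_sec : forall th, (@lebesgue_measure R).-integrable [set: R] (fun g => (hu th g)%:E))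
  (* monotone likelihood ratio assumption *)
  (l_cont : continuous (fun p : R * R => lr hq hu p.1 p.2))
  (l_incr_th : forall g, {mono (fun th => lr hq hu th g) : x y / x < y})
  (l_incr_g : forall th, {mono (fun g => lr hq hu th g) : x y / x < y})
  (l_inf : forall th c, 0 < c -> exists g, lr hq hu th g < c)
  (l_sup : forall th M, exists g, M < lr hq hu th g)
  (th : R) :
  exists! tau : R, (- xu < tau < xq) /\
    s1 hq hu pi xq xu th tau = s2 hq hu pi xq xu th tau.
Proof.
have [pi_gt0 pi_lt1] := andP hpi.
pose L := lr hq hu th.
have L_mono : {mono L : x y / x < y} := l_incr_g th.
have L_gt0 g : 0 < L g by rewrite divr_gt0.
have hqE g : hq th g = L g * hu th g by rewrite /L /lr divfK ?gt_eqF.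
have L_cont : continuous L.
  move=> g; have pair_cont : {for g, continuous (fun g : R => (th, g))}.
    exact: (cvg_pair (cvg_cst th) cvg_id).
  exact: (continuous_comp pair_cont (l_cont _)).
have [a0 [gap_a0 gap_uniq]] := score_gap_unique_root pi_gt0 pi_lt1 (hq_pos th)
  (hu_pos th) (hq_sec th) (hu_sec th) hqE (ltW_homo (mono2W L_mono)).
have [tau0 tau0_in thr_tau0] := thr_onto pi_gt0 pi_lt1 hxq hxu (L_gt0 a0).
exists tau0; split.
  split=> //; apply/eqP; rewrite -subr_eq0.
  by rewrite (s1_sub_s2_cutoff L_mono thr_tau0) gap_a0.
move=> tau [tau_in s12].
have [a La] : exists a, L a = thr pi xq xu tau.
  apply: continuous_attains_between => //; last exact: l_sup.
  by apply: l_inf; exact: thr_gt0.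
apply: (thr_inj pi_gt0 pi_lt1 hxq hxu tau0_in tau_in); rewrite thr_tau0 -La.
congr L; apply: gap_uniq.
by rewrite -(s1_sub_s2_cutoff L_mono (esym La)) s12 subrr.
Qed.
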